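(* Fix a constant $c\ge 10$. Consider the random pairwise load balancing process on $n\ge2$ nodes, where tokens are moved in skip mode. Let $t$ be a time step and condition on any history up to time $t$ for which $t\ge T_1$. Let $b$ be a token whose normalized height satisfies $\hat h_b(t)>2c$. Then, conditionally on this history, with probability at least $1/n$ we have $\hat h_b(t+1)\le \frac{17}{20}\,\hat h_b(t)$.
   Context: Random pairwise load balancing process: $n$ nodes, $m$ tokens, load vector $\ell(t)\in\mathbb{Z}^n$. In each time step $t$, independently, an ordered pair $(u,v)$ of distinct nodes is chosen uniformly at random and loads become $\ell_u(t+1)=\lceil(\ell_u(t)+\ell_v(t))/2\rceil$, $\ell_v(t+1)=\lfloor(\ell_u(t)+\ell_v(t))/2\rfloor$. Average load $\varnothing=m/n$, $\mathrm{round}(\varnothing)$ is $\varnothing$ rounded to the nearest integer, and $\Phi(\ell)=\sum_i(\ell_i-\varnothing)^2$. $T_1$ is the first time $t$ with $\Phi(\ell(t))<n$. For the analysis, tokens on each node are kept in a linear (stack) order; the height $h_b(t)$ of token $b$ is the number of tokens preceding (below) $b$ on its node, and the normalized height is $\hat h_b(t)=h_b(t)-\mathrm{round}(\varnothing)$. Skip mode: when $k$ tokens must move from the node with larger load to the node with smaller load, the moved tokens are chosen starting from the topmost token of the larger node and taking every second token downward (top, third from top, fifth from top, …) until $k$ tokens are selected; these are then placed on top of the receiving node in their original relative order, and the remaining tokens of the larger node keep their relative order. *)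

From HB Require Import structures.
From mathcomp Require Import all_boot all_order all_algebra.
Set Implicit Arguments. Unset Strict Implicit. Unset Printing Implicit Defensive.
Import Order.TTheory GRing.Theory Num.Theory.

(* A configuration of the process on n nodes: each node carries a stack of
   tokens (tokens are named by natural numbers), listed from BOTTOM to TOP. *)
Definition config (n : nat) := 'I_n -> seq nat.

Section Defs.
Variable n : nat.
Implicit Types (cfg : config n).

Definition load cfg (i : 'I_n) : nat := size (cfg i).

Definition ntokens cfg : nat := \sum_(i < n) load cfg i.

Definition avg cfg : rat := (ntokens cfg)%:R / n%:R.

Definition Phi cfg : rat := \sum_(i < n) ((load cfg i)%:R - avg cfg) ^+ 2.

(* round(avg): m/n rounded to the nearest integer (ties rounded up),
   i.e. floor(m/n + 1/2) = floor((2m + n) / (2n)). *)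
Definition round_avg cfg : nat := ((ntokens cfg).*2 + n) %/ (n.*2).

(* height of token b: number of tokens below b on its node (0 if absent) *)
Definition height cfg (b : nat) : nat :=
  match [pick i | b \in cfg i] with
  | Some i => index b (cfg i)
  | None => 0
  end.

Definition nheight cfg (b : nat) : rat :=
  (height cfg b)%:R - (round_avg cfg)%:R.

End Defs.

(* Skip mode selection: in a stack s of size L (bottom-to-top), the k moved
   tokens are the top one, the third from top, the fifth from top, ...;
   position i (from bottom) is selected iff L-1-i is even and L-1-i < 2k. *)
Definition skip_sel (L k : nat) : bitseq :=
  mkseq (fun i => odd (L - i) && (L - i <= k.*2)) L.

Definition moved (s : seq nat) (k : nat) : seq nat :=
  mask (skip_sel (size s) k) s.

Definition kept (s : seq nat) (k : nat) : seq nat :=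
  mask (map negb (skip_sel (size s) k)) s.

(* One step of the process with the chosen ordered pair (u, v), u != v:
   l_u' = ceil((l_u+l_v)/2), l_v' = floor((l_u+l_v)/2), tokens moved from
   the larger node to the smaller in skip mode, placed on top of the
   receiving stack in their original relative order. *)
Definition step (n : nat) (cfg : config n) (u v : 'I_n) : config n :=
  let lu := size (cfg u) in
  let lv := size (cfg v) in
  if lv <= lu then
    let k := (lu - lv)./2 in
    fun i => if i == u then kept (cfg u) k
             else if i == v then cfg v ++ moved (cfg u) k
             else cfg i
  else
    let k := uphalf (lv - lu) in
    fun i => if i == v then kept (cfg v) k
             else if i == u then cfg u ++ moved (cfg v) k
             else cfg i.

Definition pair_prob (n : nat) (E : 'I_n -> 'I_n -> bool) : rat :=
  (#|[set p : 'I_n * 'I_n | (p.1 != p.2) && E p.1 p.2]|)%:R / (n * n.-1)%:R.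

(* Since the average load is below round(avg) + 1/2, a node of load at least
   round(avg) + 13 contributes more than 144 to Phi; as Phi < n, fewer than
   n/144 nodes are that heavy.  Let h >= round(avg) + 21 be the height of b on
   its node w.  Pairing w, in either order, with a light node v (load at most
   round(avg) + 12) moves about (l_w - l_v)/2 tokens from w to v, and in skip
   mode every second position from about l_v upwards is moved; so whether b
   stays or moves its new height is at most (h + l_v + 2)/2.  The number of
   tokens is conserved, so round(avg) does not change and the normalized height
   becomes at most (hat h + 14)/2 <= 17/20 hat h, as hat h >= 20.  The
   2 (n - #heavy) >= n - 1 such ordered pairs have probability at least 1/n. *)

From HB Require Import structures.
From mathcomp Require Import all_boot all_order all_algebra.
From mathcomp Require Import zify lra.
Import Order.TTheory GRing.Theory Num.Theory.

Set Implicit Arguments.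
Unset Strict Implicit.

Lemma index_mask (T : eqType) (m : bitseq) (s : seq T) x :
  size m = size s -> uniq s -> x \in mask m s ->
  index x (mask m s) = count id (take (index x s) m).
Proof.
elim: s m => [|y s IH] [|a m] //= [sz] /andP [ys us].
have [<-|xy] := eqVneq y x.
  by case: a => /= [|/mem_mask]; rewrite ?eqxx // (negbTE ys).
case: a => /=; last exact: IH.
by rewrite in_cons eq_sym (negbTE xy) => /IH ->.
Qed.

Lemma uniq_flatten_mem (T : eqType) (ss : seq (seq T)) s :
  uniq (flatten ss) -> s \in ss -> uniq s.
Proof.
elim: ss => //= x ss IH; rewrite cat_uniq in_cons => /and3P [ux _ uss].
by case/orP => [/eqP ->|]; last exact: IH.
Qed.

Lemma count_take_skip_sel L k h : h <= L ->
  count id (take h (skip_sel L k)) = uphalf (minn k.*2 L) - uphalf (L - h).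
Proof.
move=> hL; rewrite /skip_sel /mkseq -map_take take_iota (minn_idPl hL) count_map.
elim: h hL => [|h IH] hL.
  by rewrite subn0 /=; have := uphalf_leq (geq_minr k.*2 L); lia.
rewrite -addn1 iotaD count_cat IH ?(ltnW hL) //= add0n addn0.
have := uphalf_half (L - h); have := uphalf_half (L - h.+1).
have := uphalf_half (minn k.*2 L).
case: (boolP (L - h <= k.*2)) => hk; rewrite ?andbT ?andbF /=.
- have /uphalf_leq : L - h <= minn k.*2 L by lia.
  lia.
- have /uphalf_leq : minn k.*2 L <= L - h.+1 by lia.
  lia.
Qed.

(* Below position [h], skip mode selects every second position from about
   [L - k.*2], i.e. from about [lx], upwards. *)
Lemma count_take_skip_sel_bounds L lx h k :
  lx < h -> h <= L -> L - lx <= k.*2.+1 -> k.*2 <= (L - lx).+1 ->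
  h <= (count id (take h (skip_sel L k))).*2 + lx + 2 /\
  (count id (take h (skip_sel L k))).*2 + lx <= h + 2.
Proof.
move=> lxh hL kl kr; rewrite count_take_skip_sel //.
have half2 y : y <= (uphalf y).*2 <= y.+1 by rewrite uphalfK; case: odd; lia.
have /uphalf_leq : L - h <= minn k.*2 L by lia.
have := half2 (minn k.*2 L); have := half2 (L - h).
move: (uphalf (minn k.*2 L)) (uphalf (L - h)) => U V; lia.
Qed.

Lemma size_skip_sel L k : size (skip_sel L k) = L.
Proof. exact: size_mkseq. Qed.

Lemma size_kept_moved s k : size (kept s k) + size (moved s k) = size s.
Proof.
rewrite /kept /moved !size_mask ?size_map ?size_iota ?size_skip_sel //.
by rewrite count_map addnC count_predC size_skip_sel.
Qed.

Lemma index_moved s k b : uniq s -> b \in moved s k ->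
  index b (moved s k) = count id (take (index b s) (skip_sel (size s) k)).
Proof. by move=> us bm; rewrite index_mask ?size_skip_sel. Qed.

Lemma index_kept s k b : uniq s -> b \in kept s k ->
  index b (kept s k) = index b s - count id (take (index b s) (skip_sel (size s) k)).
Proof.
move=> us bk; rewrite index_mask ?size_map ?size_iota ?size_skip_sel //.
rewrite -(map_take _ negb) count_map.
set l := take _ (skip_sel _ _).
have := count_predC id l; rewrite size_takel ?size_skip_sel ?index_size //.
by have -> : count (preim negb id) l = count (predC id) l by []; lia.
Qed.

Lemma contraction_17_20 (R : realFieldType) (h h' r : nat) :
  h'.*2 <= h + r + 14 -> r + 20 <= h ->
  (h'%:R - r%:R <= 17 / 20 * (h%:R - r%:R) :> R)%R.
Proof.
by rewrite -!(ler_nat R) -addnn !natrD => h'le hge; lra.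
Qed.

Section Transfer.
Variables (n : nat) (cfg : config n).
Hypothesis cfg_uniq : uniq (flatten [seq cfg i | i <- enum 'I_n]).

Lemma uniq_node i : uniq (cfg i).
Proof. by apply: uniq_flatten_mem cfg_uniq _; apply: map_f; rewrite mem_enum. Qed.

Lemma token_node_inj b i j : b \in cfg i -> b \in cfg j -> i = j.
Proof.
move=> bi bj; apply/eqP/negPn/negP => ij.
have := count_uniq_mem b cfg_uniq.
rewrite count_flatten sumnE !big_map (bigD1 i) //= (bigD1 j) 1?eq_sym //=.
have ci : 0 < count_mem b (cfg i) by rewrite -has_count has_pred1.
have cj : 0 < count_mem b (cfg j) by rewrite -has_count has_pred1.
move: ci cj; case: (_ \in _) => /=; lia.
Qed.

Lemma height_eq_index w b : b \in cfg w -> height cfg b = index b (cfg w).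
Proof.
move=> bw; rewrite /height; case: pickP => [i bi|/(_ w)]; last by rewrite bw.
by rewrite (token_node_inj bi bw).
Qed.

(* Both orientations of [step] on a pair move tokens from the heavier node
   [w] to the lighter node [x]; only the number [k] of moved tokens differs. *)
Definition transfer (w x : 'I_n) (k : nat) : config n :=
  fun i => if i == w then kept (cfg w) k
           else if i == x then cfg x ++ moved (cfg w) k else cfg i.

Lemma ntokens_transfer w x k : x != w -> ntokens (transfer w x k) = ntokens cfg.
Proof.
move=> xw; rewrite /ntokens (bigD1 w) // (bigD1 x xw) /= [RHS](bigD1 w) // (bigD1 x xw) /=.
rewrite /load /transfer eqxx (negbTE xw) eqxx size_cat -(size_kept_moved (cfg w) k).
rewrite (eq_bigr (fun i => size (cfg i))); first lia.
by move=> i /andP [/negbTE -> /negbTE ->].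
Qed.

Lemma height_transfer w x k b :
  x != w -> b \in cfg w -> size (cfg x) < index b (cfg w) ->
  size (cfg w) - size (cfg x) <= k.*2.+1 -> k.*2 <= (size (cfg w) - size (cfg x)).+1 ->
  (height (transfer w x k) b).*2 <= index b (cfg w) + size (cfg x) + 2.
Proof.
move=> xw bw xb kl kr.
have hL : index b (cfg w) <= size (cfg w) by rewrite index_size.
have := count_take_skip_sel_bounds xb hL kl kr.
rewrite /height /transfer; case: pickP => [i|_]; last lia.
case: (i =P w) => [_ bk|iw].
  by rewrite index_kept ?uniq_node //; set S := count id _; lia.
have bx : b \notin cfg x by apply: contra_neqN xw => bx; rewrite (token_node_inj bx bw).
case: (i =P x) => [_ bm|_ bi]; last by case: iw; apply: token_node_inj bi bw.
rewrite mem_cat (negbTE bx) /= in bm.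
rewrite index_cat (negbTE bx) index_moved ?uniq_node //.
by set S := count id _; set lx := size (cfg x); set h := index b (cfg w); lia.
Qed.

Lemma step_to_lighter u v : size (cfg v) < size (cfg u) ->
  step cfg u v = transfer u v (size (cfg u) - size (cfg v))./2.
Proof. by move=> vu; rewrite /step ltnW. Qed.

Lemma step_from_lighter u v : size (cfg u) < size (cfg v) ->
  step cfg u v = transfer v u (uphalf (size (cfg v) - size (cfg u))).
Proof. by move=> uv; rewrite /step leqNgt uv. Qed.

Lemma nheight_transfer_contraction w x k b :
  x != w -> b \in cfg w ->
  size (cfg w) - size (cfg x) <= k.*2.+1 -> k.*2 <= (size (cfg w) - size (cfg x)).+1 ->
  size (cfg x) <= round_avg cfg + 12 -> round_avg cfg + 21 <= index b (cfg w) ->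
  (nheight (transfer w x k) b <= 17 / 20 * nheight cfg b)%R.
Proof.
move=> xw bw kl kr xlight bhigh.
have xb : size (cfg x) < index b (cfg w) by lia.
have := height_transfer xw bw xb kl kr.
rewrite /nheight /round_avg (ntokens_transfer _ xw) -/(round_avg cfg) (height_eq_index bw).
by move=> h'; apply: contraction_17_20; lia.
Qed.

Lemma nheight_step_contraction w v b :
  b \in cfg w -> size (cfg v) <= round_avg cfg + 12 ->
  round_avg cfg + 21 <= index b (cfg w) ->
  (nheight (step cfg w v) b <= 17 / 20 * nheight cfg b)%R /\
  (nheight (step cfg v w) b <= 17 / 20 * nheight cfg b)%R.
Proof.
move=> bw vlight bhigh.
have bsize : index b (cfg w) <= size (cfg w) by rewrite index_size.
have vw : size (cfg v) < size (cfg w) by lia.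
have vnw : v != w by apply: contraTneq vw => ->; rewrite ltnn.
rewrite step_to_lighter ?step_from_lighter; [|exact: vw..].
by split; apply: nheight_transfer_contraction => //; lia.
Qed.

End Transfer.

Local Open Scope ring_scope.

Lemma avg_lt_round_avg n (cfg : config n) : (0 < n)%N ->
  avg cfg < (round_avg cfg)%:R + 1 / 2.
Proof.
move=> n0; rewrite /avg /round_avg; set m := ntokens cfg.
have := @ltn_ceil (m.*2 + n) n.*2; rewrite double_gt0 => /(_ n0).
rewrite -(ltr_nat rat) -!addnn !natrD natrM !natrD ltr_pdivrMr ?ltr0n //.
set q := _%:R; lra.
Qed.

Lemma card_heavy_nodes n (cfg : config n) : (0 < n)%N ->
  (144 * #|[set i | (round_avg cfg + 13 <= load cfg i)%N]|)%:R <= Phi cfg.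
Proof.
move=> n0; have avgr := avg_lt_round_avg cfg n0.
rewrite natrM mulr_natr -sumr_const big_mkcond /=.
apply: ler_sum => i _; rewrite inE.
case: ifP => [heavy|_]; last exact: sqr_ge0.
rewrite expr2; move: heavy; rewrite -(ler_nat rat) natrD => heavy; nra.
Qed.

Lemma pair_prob_ge_inv n (E : 'I_n -> 'I_n -> bool) : (1 < n)%N ->
  (n.-1 <= #|[set p : 'I_n * 'I_n | (p.1 != p.2) && E p.1 p.2]|)%N ->
  n%:R^-1 <= pair_prob E.
Proof.
move=> n1 goodE; rewrite /pair_prob ler_pdivlMr ?ltr0n ?muln_gt0; last lia.
rewrite natrM mulrA mulVf ?pnatr_eq0 -?lt0n ?mul1r ?ler_nat //; lia.
Qed.

Lemma card_star_pairs (T : finType) (w : T) (A : {set T}) : w \notin A ->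
  #|setX [set w] A :|: setX A [set w]| = (#|A| + #|A|)%N.
Proof.
move=> wA; rewrite cardsU !cardsX cards1 mul1n muln1.
suff -> : setX [set w] A :&: setX A [set w] = set0 by rewrite cards0 subn0.
apply/setP => -[p1 p2]; rewrite !inE /=.
by apply/negP => /andP [/andP [/eqP -> _] /andP [wA1 _]]; rewrite wA1 in wA.
Qed.

Theorem lemma3 (c : rat) (n : nat) (cfg : config n) (b : nat) :
  10 <= c ->
  (2 <= n)%N ->
  uniq (flatten [seq cfg i | i <- enum 'I_n]) ->
  b \in flatten [seq cfg i | i <- enum 'I_n] ->
  Phi cfg < n%:R ->
  2 * c < nheight cfg b ->
  n%:R^-1 <= pair_prob (fun u v => nheight (step cfg u v) b <= (17 / 20) * nheight cfg b).
Proof.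
move=> c10 n2 cfg_uniq /flatten_mapP [w _ bw] Phi_small b_high.
set r := round_avg cfg; set heavy := [set i | (r + 13 <= load cfg i)%N].
have bw_high : (r + 21 <= index b (cfg w))%N.
  move: b_high; rewrite /nheight (height_eq_index cfg_uniq bw) -/r => b_high.
  suff : (r + 20 < index b (cfg w))%N by lia.
  by rewrite -(ltr_nat rat) natrD; lra.
have few_heavy : (144 * #|heavy| < n)%N.
  by rewrite -(ltr_nat rat); apply: le_lt_trans Phi_small; apply: card_heavy_nodes; lia.
have w_heavy : w \in heavy.
  by rewrite inE (leq_trans _ (leq_trans bw_high (index_size b (cfg w)))) ?leq_add2l.
have star_good : setX [set w] (~: heavy) :|: setX (~: heavy) [set w] \subset
    [set p | (p.1 != p.2) && (nheight (step cfg p.1 p.2) b <= 17 / 20 * nheight cfg b)].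
  apply/subsetP => -[u v]; rewrite in_setU !in_setX !in_set1 !in_setC /= [in X in _ -> X]inE /=.
  have light x : x \notin heavy -> (size (cfg x) <= r + 12)%N /\ x != w.
    by move=> xl; split; [move: xl; rewrite inE /load; lia | apply: contraNneq xl => ->].
  case/orP => /andP [] => [/eqP -> /light [vl vw] | /light [ul uw] /eqP ->].
    by rewrite eq_sym vw; case: (nheight_step_contraction cfg_uniq bw vl bw_high).
  by rewrite uw; case: (nheight_step_contraction cfg_uniq bw ul bw_high).
apply: pair_prob_ge_inv => //; apply: leq_trans (subset_leq_card star_good).
rewrite card_star_pairs; last by rewrite in_setC negbK.
by move: few_heavy; have := cardsC heavy; rewrite card_ord; lia.
Qed.
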